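(* Let $M$ be a loopless binary matroid on an $n$-element ground set $S$, of rank $r$. 1. If the ground set $S$ is colored with exactly $r$ colors (every color being used), then $M$ contains a rainbow colored circuit or a monochromatic cut. 2. If the ground set $S$ is colored with exactly $n-r$ colors (every color being used), then $M$ contains a rainbow colored cut or a monochromatic circuit.
   Context: A coloring of $S$ is a partition of $S$ into nonempty color classes. A subset of $S$ is rainbow colored if no two of its elements have the same color, and monochromatic if all its elements have the same color. A cut of a matroid is an inclusionwise minimal subset of the ground set intersecting every basis (equivalently, a circuit of the dual matroid). A matroid is binary if it is representable over $GF(2)$. *)

From HB Require Import structures.
From mathcomp Require Import all_boot all_order all_algebra.
Set Implicit Arguments. Unset Strict Implicit. Unset Printing Implicit Defensive.
Import GRing.Theory.

Record matroid (S : finType) := Matroid {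
  indep : {set S} -> bool;
  indep0 : indep set0;
  indep_sub : forall A B : {set S}, A \subset B -> indep B -> indep A;
  indep_exchange : forall A B : {set S}, indep A -> indep B -> #|A| < #|B| ->
    exists2 x, x \in B :\: A & indep (x |: A)
}.

Section MatroidNotions.
Variables (S : finType) (M : matroid S).

Definition basis (B : {set S}) : bool := maxset (indep M) B.

Definition circuit (C : {set S}) : bool := minset (fun X => ~~ indep M X) C.

Definition meets_all_bases (X : {set S}) : bool :=
  [forall B : {set S}, basis B ==> (X :&: B != set0)].
Definition cut (X : {set S}) : bool := minset meets_all_bases X.

Definition mrank : nat := \max_(A : {set S} | indep M A) #|A|.

Definition loopless : Prop := forall x : S, indep M [set x].

(* binary: representable over GF(2): there is a family of vectors v_x in
   GF(2)^m such that A is independent iff (v_x)_{x in A} is linearly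
   independent (as a family, so repeated vectors count as dependent). *)
Definition binary : Prop :=
  exists (m : nat) (v : S -> 'rV['F_2]_m),
    forall A : {set S}, indep M A = free [seq v x | x in A].
End MatroidNotions.

(* A coloring with exactly k colors (all used): a surjection S -> 'I_k;
   color classes are the fibres. *)
Definition coloring (S : finType) (k : nat) (c : S -> 'I_k) : Prop :=
  forall i : 'I_k, exists x : S, c x = i.

Definition rainbow (S : finType) (k : nat) (c : S -> 'I_k) (A : {set S}) : Prop :=
  {in A &, injective c}.

Definition monochromatic (S : finType) (k : nat) (c : S -> 'I_k) (A : {set S}) : Prop :=
  {in A &, forall x y, c x = c y}.

(* Fix a transversal t of the colour classes.  With r colours and no rainbow
   circuit, the image of every transversal is a basis; with n - r colours and no
   rainbow cut, its complement is.  Over GF(2) the basis built from t yields a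
   0/1 matrix lam (colours x elements): the fundamental cocircuits of the basis
   in the first case, the fundamental circuits of the complementary basis in
   the second.  Exchanging t on a set Y of colours for another transversal e
   keeps a basis, so no square submatrix (lam b (e a))_{a,b in Y} can have all
   row and column sums zero; in particular lam (c y) y = 1.
   Combinatorially this forces some row b to vanish outside the class of b:
   otherwise every colour a has an in-neighbour in the digraph "row b has a
   nonzero entry of colour a", a minimal predecessor-closed set of colours
   induces a disjoint union of directed cycles, and choosing the witnessing
   entries gives a forbidden submatrix with exactly two ones in each row and
   column.  That row is a cocycle (resp. a cycle) through t b inside the class
   of b, so the class meets every basis and contains a cut (resp. is dependent
   and contains a circuit), which is monochromatic. *)

From mathcomp Require Import all_boot all_order all_algebra.
From mathcomp Require Import zify.
From Stdlib Require Import Classical_Prop.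
Set Implicit Arguments. Unset Strict Implicit. Unset Printing Implicit Defensive.
Import GRing.Theory.

Section MatroidRank.
Variables (S : finType) (M : matroid S).

Lemma indep_card_le_rank A : indep M A -> #|A| <= mrank M.
Proof. by move=> iA; apply: (@leq_bigmax_cond _ (indep M) (fun A => #|A|)). Qed.

Lemma exists_indep_rank : exists2 A, indep M A & #|A| = mrank M.
Proof.
have [|A iA mrankE] := @eq_bigmax_cond _ (indep M) (fun A : {set S} => #|A|).
  by apply/card_gt0P; exists set0; apply: indep0.
by exists A.
Qed.

Lemma indep_rank_basis A : indep M A -> #|A| = mrank M -> basis M A.
Proof.
move=> iA cardA; apply/maxsetP; split=> // B iB sAB.
by apply/eqP; rewrite eq_sym eqEcard sAB cardA indep_card_le_rank.
Qed.

Lemma card_basis B : basis M B -> #|B| = mrank M.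
Proof.
move=> bB; apply/eqP; rewrite eqn_leq indep_card_le_rank ?(maxsetp bB) //=.
have [A iA <-] := exists_indep_rank; rewrite leqNgt; apply/negP => ltBA.
have [x /setDP [_ xB] ixB] := indep_exchange (maxsetp bB) iA ltBA.
by move: xB; rewrite -(maxsetsup bB ixB (subsetUr _ _)) setU11.
Qed.

Lemma rank_le_card : mrank M <= #|S|.
Proof. by have [A _ <-] := exists_indep_rank; apply: max_card. Qed.

End MatroidRank.

Section ColoringSections.
Variables (S : finType) (k : nat) (c : S -> 'I_k).

Lemma coloring_section : coloring c -> exists t, cancel t c.
Proof. exact: fin_all_exists. Qed.

Lemma section_rainbow f : cancel f c -> rainbow c (f @: setT).
Proof. by move=> fK _ _ /imsetP [a _ ->] /imsetP [b _ ->]; rewrite !fK => ->. Qed.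

Lemma card_section f : cancel f c -> #|f @: setT| = k.
Proof. by move=> fK; rewrite card_imset ?cardsT ?card_ord //; apply: can_inj fK. Qed.

Lemma monochromatic_class b : monochromatic c [set x | c x == b].
Proof. by move=> x y; rewrite !inE => /eqP -> /eqP ->. Qed.

End ColoringSections.

Section MinimalPredClosed.
Variables (T : finType) (R : rel T).

Definition pred_closed (Z : {set T}) :=
  (Z != set0) && [forall b in Z, exists a in Z, R a b].

Variables (Y : {set T}) (q : T -> T).
Hypotheses (Ymin : minset pred_closed Y) (qY : {in Y, forall b, q b \in Y})
  (Rq : {in Y, forall b, R (q b) b}).

Lemma minimal_pred_closed_perm : q @: Y = Y.
Proof.
have /minsetP [/andP [Y0 _] minY] := Ymin; apply: minY.
  apply/andP; split.
    by have /set0Pn [b bY] := Y0; apply/set0Pn; exists (q b); apply: imset_f.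
  apply/forall_inP => _ /imsetP [b bY ->]; apply/exists_inP.
  by exists (q (q b)); [apply/imset_f/qY | apply/Rq/qY].
by apply/subsetP => _ /imsetP [b bY ->]; apply: qY.
Qed.

Lemma minimal_pred_closed_inj : {in Y &, injective q}.
Proof. by apply/imset_injP; rewrite minimal_pred_closed_perm. Qed.

Lemma minimal_pred_closed_chordless a b : a \in Y -> b \in Y -> R a b -> a = q b.
Proof.
move=> aY bY Rab; apply/eqP; apply: contraT => aNqb.
have /minsetP [_ minY] := Ymin.
suff /setP/(_ (q b)) : Y :\ q b = Y by rewrite setD11 qY.
apply: minY; last exact: subsetDl.
apply/andP; split; first by apply/set0Pn; exists a; rewrite !inE aNqb.
apply/forall_inP => x /setD1P [xNqb xY]; apply/exists_inP.
have [->|xNb] := eqVneq x b; first by exists a; rewrite // !inE aNqb.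
exists (q x); last exact: Rq.
by rewrite !inE qY // andbT (inj_in_eq minimal_pred_closed_inj).
Qed.

End MinimalPredClosed.

Lemma induced_cycle_cover (T : finType) (R : rel T) (X : {set T}) :
  X != set0 -> {in X, forall b, exists2 a, a \in X & R a b} ->
  exists Y : {set T}, [/\ Y != set0,
    {in Y, forall b, #|[set a in Y | R a b]| = 1} &
    {in Y, forall a, #|[set b in Y | R a b]| = 1}].
Proof.
move=> X0 Xpred; have [|Y Ymin _] := @minset_exists _ (pred_closed R) X.
  apply/andP; split=> //; apply/forall_inP => b /Xpred [a aX Rab].
  by apply/exists_inP; exists a.
have /minsetP [/andP [Y0 /forall_inP Ypred] _] := Ymin.
pose q b := odflt b [pick a in Y | R a b].
have qP b : b \in Y -> q b \in Y /\ R (q b) b.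
  rewrite /q => bY; case: pickP => [a /andP [] //|none] /=.
  by have /exists_inP [a aY Rab] := Ypred b bY; have := none a; rewrite aY Rab.
have qY : {in Y, forall b, q b \in Y} by move=> b /qP [].
have Rq : {in Y, forall b, R (q b) b} by move=> b /qP [].
have chordless := minimal_pred_closed_chordless Ymin qY Rq.
exists Y; split=> // [b bY | a].
  rewrite (_ : [set a in Y | R a b] = [set q b]) ?cards1 //.
  apply/setP => a; rewrite !inE; apply/andP/eqP => [[aY Rab] | ->].
    exact: chordless.
  exact: qP.
rewrite -{1}(minimal_pred_closed_perm Ymin qY Rq) => /imsetP [b bY ->].
rewrite (_ : [set b' in Y | R (q b) b'] = [set b]) ?cards1 //.
apply/setP => b'; rewrite !inE; apply/andP/eqP => [[b'Y Rb'] | ->].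
  apply: (minimal_pred_closed_inj Ymin qY Rq) => //.
  by rewrite -(chordless _ _ (qY b bY) b'Y Rb').
by split=> //; apply: Rq.
Qed.

Local Open Scope ring_scope.

Section LinearRepresentation.
Variables (S : finType) (F : fieldType) (vT : vectType F) (v : S -> vT).
Variable M : matroid S.
Hypothesis indep_free : forall A, indep M A = free [seq v x | x in A].

Definition lcomb (k : S -> F) : vT := \sum_x k x *: v x.

Lemma lcomb_sum (I : finType) (P : pred I) (k : I -> S -> F) :
  lcomb (fun x => \sum_(i | P i) k i x) = \sum_(i | P i) lcomb (k i).
Proof.
rewrite /lcomb exchange_big /=; apply: eq_bigr => x _.
by rewrite scaler_suml.
Qed.

Lemma lcomb_push (I : finType) (g : I -> S) (kappa : I -> F) :
  lcomb (fun x => \sum_(i | g i == x) kappa i) = \sum_i kappa i *: v (g i).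
Proof.
rewrite (partition_big g xpredT) //=; apply: eq_bigr => x _.
by rewrite scaler_suml; apply: eq_bigr => i /eqP ->.
Qed.

Lemma indep_lcomb_eq0 A k : indep M A -> (forall x, x \notin A -> k x = 0) ->
  lcomb k = 0 -> forall x, k x = 0.
Proof.
rewrite indep_free => /freeP freeA k0 k_rel x.
have [xA|] := boolP (x \in A); last exact: k0.
rewrite -(enum_rankK_in xA xA); apply: (freeA (k \o enum_val)); rewrite -[RHS]k_rel /lcomb.
rewrite (bigID (mem A)) /= [X in _ = _ + X]big1 ?addr0; last first.
  by move=> y /k0 ->; rewrite scale0r.
by rewrite [RHS]big_enum_val; apply: eq_bigr => i _; rewrite nth_image.
Qed.

Lemma indep_family_eq0 (I : finType) (g : I -> S) (kappa : I -> F) :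
  injective g -> indep M (g @: setT) -> \sum_i kappa i *: v (g i) = 0 ->
  forall i, kappa i = 0.
Proof.
move=> g_inj ig; rewrite -lcomb_push => /(indep_lcomb_eq0 ig) push0 i.
have <- : \sum_(j | g j == g i) kappa j = kappa i.
  by apply: big_pred1 => j; apply: inj_eq.
apply: push0 => x gx; rewrite big_pred0 // => j.
by apply: contraNF gx => /eqP <-; apply: imset_f.
Qed.

Lemma basis_span B y : basis M B -> v y \in <<[seq v x | x in B]>>%VS.
Proof.
move=> bB; apply: contraT => yNspan.
have yB : y \notin B.
  by apply: contra yNspan => yB; apply/memv_span/map_f; rewrite mem_enum.
suff /(maxsetsup bB)/(_ (subsetUr _ _)) yBE : indep M (y |: B).
  by move: yB; rewrite -yBE setU11.
rewrite indep_free (perm_free (_ : perm_eq _ (v y :: [seq v x | x in B]))).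
  by rewrite free_cons yNspan -indep_free (maxsetp bB).
change (perm_eq (map v (enum (y |: B))) (map v (y :: enum B))).
apply/perm_map/uniq_perm; rewrite /= ?mem_enum ?yB ?enum_uniq // => x.
by rewrite in_cons !mem_enum in_setU1.
Qed.

Lemma basis_lcomb B y : basis M B ->
  exists2 k, (forall x, x \notin B -> k x = 0) & lcomb k = v y.
Proof.
move=> /(basis_span y) /coord_span vyE.
exists (fun x => \sum_(i | enum_val i == x) coord (image_tuple v B) i (v y)).
  move=> x xB; rewrite big_pred0 // => i.
  by apply: contraNF xB => /eqP <-; apply: enum_valP.
by rewrite lcomb_push [RHS]vyE; apply: eq_bigr => i _; rewrite nth_image.
Qed.

Lemma basis_family_coords (I : finType) (g : I -> S) : injective g ->
  basis M (g @: setT) -> exists lam : I -> S -> F,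
  forall y, v y = \sum_i lam i y *: v (g i).
Proof.
move=> g_inj bg; have [ka ka0 kaE] := fin_all_exists2 (fun y => basis_lcomb y bg).
exists (fun i y => ka y (g i)) => y; rewrite -kaE /lcomb (bigID (mem (g @: setT))) /=.
rewrite [X in _ + X]big1 ?addr0 => [|x /ka0 ->]; last by rewrite scale0r.
by rewrite big_imset //=; [apply: eq_bigl => i; rewrite inE | move=> i j _ _ /g_inj].
Qed.

Lemma fundamental_circuits (I : finType) (g : I -> S) B :
  injective g -> basis M B -> (forall i, g i \notin B) ->
  exists2 lam : I -> S -> F, (forall i, lcomb (lam i) = 0) &
    (forall i j, lam j (g i) = (i == j)%:R).
Proof.
move=> g_inj bB gNB.
have [ka ka0 kaE] := fin_all_exists2 (fun i => basis_lcomb (g i) bB).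
exists (fun j x => (x == g j)%:R - ka j x) => [j | i j].
  rewrite /lcomb; under eq_bigr do rewrite scalerBl.
  rewrite sumrB -/(lcomb (ka j)) kaE (bigD1 (g j)) //= eqxx scale1r big1 ?addr0 ?subrr //.
  by move=> x /negPf ->; rewrite scale0r.
by rewrite ka0 // subr0 (inj_eq g_inj).
Qed.

End LinearRepresentation.

Lemma F2_add11 : 1 + 1 = 0 :> 'F_2. Proof. exact: val_inj. Qed.
Lemma F2_eq1 (x : 'F_2) : x != 0 -> x = 1.
Proof. by case: x => [[|[|n]] //= Hn] _; apply: val_inj. Qed.

Lemma sumr_indicator (R : pzSemiRingType) (T : finType) (Y : {set T}) (P : pred T) :
  \sum_(a in Y) (P a)%:R = #|[set a in Y | P a]|%:R :> R.
Proof.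
rewrite -sum1_card natr_sum [LHS]big_mkcond [RHS]big_mkcond /=; apply: eq_bigr => a _.
by rewrite inE; case: (a \in Y); case: (P a).
Qed.

Section BalancedSubmatrix.
Variables (S : finType) (k : nat) (c : S -> 'I_k) (lam : 'I_k -> S -> 'F_2).

Definition balanced (Y : {set 'I_k}) (e : 'I_k -> S) : Prop :=
  [/\ Y != set0, {in Y, cancel e c},
      {in Y, forall b, \sum_(a in Y) lam b (e a) = 0} &
      {in Y, forall a, \sum_(b in Y) lam b (e a) = 0}].

Lemma unbalanced_diag : (forall Y e, ~ balanced Y e) -> forall y, lam (c y) y = 1.
Proof.
move=> unbal y; apply/F2_eq1/eqP => lam0; apply: (unbal [set c y] (fun=> y)).
split; first by apply/set0Pn; exists (c y); rewrite inE.
- by move=> a; rewrite inE eq_sym => /eqP.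
- by move=> b; rewrite inE => /eqP ->; rewrite big_set1.
- by move=> a _; rewrite big_set1.
Qed.

Definition hits (a b : 'I_k) := (a != b) && [exists y, (c y == a) && (lam b y != 0)].

Lemma balanced_of_entries (R : rel 'I_k) Y e : Y != set0 -> {in Y, cancel e c} ->
  {in Y, forall b, #|[set a in Y | R a b]| = 1} ->
  {in Y, forall a, #|[set b in Y | R a b]| = 1} ->
  {in Y &, forall a b, lam b (e a) = (a == b)%:R + (R a b)%:R} -> balanced Y e.
Proof.
move=> Y0 eK indeg outdeg entry; split=> // [b bY | a aY].
  rewrite (eq_bigr _ (fun a aY => entry a b aY bY)) big_split /=.
  rewrite [X in _ + X]sumr_indicator indeg //.
  by rewrite (bigD1 b) //= eqxx big1 ?addr0 ?F2_add11 // => a /andP [_ /negPf ->].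
rewrite (eq_bigr _ (fun b bY => entry a b aY bY)) big_split /=.
rewrite [X in _ + X]sumr_indicator outdeg //.
rewrite (bigD1 a) //= eqxx big1 ?addr0 ?F2_add11 // => b /andP [_].
by rewrite eq_sym => /negPf ->.
Qed.

Lemma cycle_cover_balanced Y : (forall y, lam (c y) y = 1) -> Y != set0 ->
  {in Y, forall b, #|[set a in Y | hits a b]| = 1} ->
  {in Y, forall a, #|[set b in Y | hits a b]| = 1} ->
  exists e, balanced Y e.
Proof.
move=> diag Y0 indeg outdeg.
pose hit_by a y := (c y == a) && [exists b in Y, (a != b) && (lam b y != 0)].
have hit_byP a : a \in Y -> exists y, hit_by a y.
  move=> aY; have /card_gt0P [b] : (0 < #|[set b in Y | hits a b]|)%N by rewrite outdeg.
  rewrite inE => /andP [bY /andP [aNb /existsP [y /andP [/eqP cy lamby]]]].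
  by exists y; rewrite /hit_by cy eqxx; apply/exists_inP; exists b; rewrite ?aNb.
have /set0Pn [a0 /hit_byP [y0 _]] := Y0.
have /fin_all_exists [e eP] a : exists y, a \in Y -> hit_by a y.
  by have [/hit_byP [y]|] := boolP (a \in Y); [exists y | exists y0].
have eK : {in Y, cancel e c} by move=> a /eP /andP [/eqP].
have hits_e a b : a \in Y -> a != b -> lam b (e a) != 0 -> hits a b.
  by move=> aY aNb lab; rewrite /hits aNb; apply/existsP; exists (e a); rewrite eK ?eqxx.
exists e; apply: (balanced_of_entries (R := hits)) => // a b aY bY.
have [<-|aNb] := eqVneq a b.
  by rewrite /hits eqxx addr0; have := diag (e a); rewrite eK.
rewrite add0r; have [lab0|/F2_eq1 lab1] := eqVneq (lam b (e a)) 0; last first.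
  by rewrite hits_e ?lab1 ?oner_neq0.
have /andP [_ /exists_inP [b' b'Y /andP [aNb' lab']]] := eP a aY.
rewrite lab0; have [hab|//] := boolP (hits a b).
have /cards1P [b1 hitsE] : #|[set b in Y | hits a b]| == 1%N by rewrite outdeg.
have: b \in [set b in Y | hits a b] by rewrite inE bY hab.
have: b' \in [set b in Y | hits a b] by rewrite inE b'Y hits_e.
by rewrite hitsE !inE => /eqP b'E /eqP bE; rewrite b'E -bE lab0 eqxx in lab'.
Qed.

Lemma unbalanced_row_in_class : (0 < k)%N -> (forall Y e, ~ balanced Y e) ->
  exists b, forall y, c y != b -> lam b y = 0.
Proof.
move=> k_gt0 unbal.
have [/existsP [b /forallP rowb] | /existsPn rowsNclass] :=
  boolP [exists b, [forall y, (c y != b) ==> (lam b y == 0)]].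
  by exists b => y /(implyP (rowb y)) /eqP.
have [||Y [Y0 indeg outdeg]] := @induced_cycle_cover _ hits setT.
- by apply/set0Pn; exists (Ordinal k_gt0).
- move=> b _; have /forallPn [y] := rowsNclass b; rewrite negb_imply => /andP [cyNb lby].
  by exists (c y) => //; rewrite /hits cyNb; apply/existsP; exists y; rewrite eqxx.
by have [e /unbal] := cycle_cover_balanced (unbalanced_diag unbal) Y0 indeg outdeg.
Qed.

End BalancedSubmatrix.

Section RainbowCircuitOrMonochromaticCut.
Variables (S : finType) (vT : vectType 'F_2) (v : S -> vT) (M : matroid S).
Hypothesis indep_free : forall A, indep M A = free [seq v x | x in A].
Variable c : S -> 'I_(mrank M).
Hypothesis rainbow_indep : forall A, rainbow c A -> indep M A.

Lemma section_basis f : cancel f c -> basis M (f @: setT).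
Proof.
move=> fK; apply: indep_rank_basis (card_section fK).
exact/rainbow_indep/section_rainbow.
Qed.

Variables (t : 'I_(mrank M) -> S) (lam : 'I_(mrank M) -> S -> 'F_2).
Hypotheses (tK : cancel t c) (lamE : forall y, v y = \sum_b lam b y *: v (t b)).

Lemma basis_coords_unbalanced Y e : ~ balanced c lam Y e.
Proof.
move=> [/set0Pn [a0 a0Y] eK rows0 _].
pose f a := if a \in Y then e a else t a.
have fK : cancel f c by move=> a; rewrite /f; case: ifP => [/eK|].
pose s b := \sum_(a in Y) lam b (e a).
pose kappa a := if a \in Y then 1 else - s a.
suff /(indep_family_eq0 indep_free (can_inj fK) (maxsetp (section_basis fK)))/(_ a0) :
    \sum_a kappa a *: v (f a) = 0.
  by rewrite /kappa a0Y => /eqP; rewrite oner_eq0.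
have sE : \sum_(a in Y) v (e a) = \sum_(b | b \notin Y) s b *: v (t b).
  rewrite (eq_bigr _ (fun a _ => lamE (e a))) exchange_big (bigID (mem Y)) /=.
  rewrite big1 ?add0r => [|b bY]; last by rewrite -scaler_suml rows0 ?scale0r.
  by apply: eq_bigr => b _; rewrite scaler_suml.
rewrite (bigID (mem Y)) /= (eq_bigr _ (fun a aY => _ : _ = v (e a))); last first.
  by move=> a aY; rewrite /kappa /f aY scale1r.
rewrite sE -big_split big1 // => a /negPf aNY.
by rewrite /kappa /f aNY scaleNr; apply: subrr.
Qed.

Lemma class_meets_all_bases b : (forall y, c y != b -> lam b y = 0) ->
  meets_all_bases M [set x | c x == b].
Proof.
move=> row_b; apply/forallP => B; apply/implyP => bB; apply/eqP => classB0.
have [kp kp0 kpE] := basis_lcomb indep_free (t b) bB.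
pose kappa a := (a == b)%:R - \sum_y kp y * lam a y.
have /(indep_family_eq0 indep_free (can_inj tK) (maxsetp (section_basis tK)))/(_ b) :
    \sum_a kappa a *: v (t a) = 0.
  under eq_bigr do rewrite scalerBl.
  rewrite sumrB (bigD1 b) //= eqxx scale1r big1 ?addr0 => [|a /negPf ->]; last first.
    by rewrite scale0r.
  apply/eqP; rewrite subr_eq0 -[X in X == _]kpE; apply/eqP.
  under [RHS]eq_bigr do rewrite scaler_suml.
  rewrite exchange_big; apply: eq_bigr => y _ /=.
  by rewrite [in LHS]lamE scaler_sumr; apply: eq_bigr => a _; rewrite scalerA.
rewrite /kappa eqxx big1 ?subr0 => [/eqP|y _]; first by rewrite oner_eq0.
have [yB|/kp0 ->] := boolP (y \in B); last by rewrite mul0r.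
rewrite row_b ?mulr0 //; apply/eqP => cyb.
by move/setP/(_ y): classB0; rewrite !inE cyb eqxx yB.
Qed.

End RainbowCircuitOrMonochromaticCut.

Lemma rainbow_circuit_or_monochromatic_cut (S : finType) (vT : vectType 'F_2)
    (v : S -> vT) (M : matroid S) (c : S -> 'I_(mrank M)) :
  (forall A, indep M A = free [seq v x | x in A]) -> (0 < #|S|)%N -> coloring c ->
  (exists C, circuit M C /\ rainbow c C) \/ (exists D, cut M D /\ monochromatic c D).
Proof.
move=> indep_free /card_gt0P [x0 _] col.
have [|no_rainbow] := classic (exists C, circuit M C /\ rainbow c C); [by left | right].
have rainbow_indep A : rainbow c A -> indep M A.
  move=> rA; apply: contraT => /(@minset_exists _ (fun X => ~~ indep M X)) [C circC sCA].
  case: no_rainbow.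
  by exists C; split=> //; apply: sub_in2 rA => x; apply: (subsetP sCA).
have [t tK] := coloring_section col.
have [lam lamE] :=
  basis_family_coords indep_free (can_inj tK) (section_basis rainbow_indep tK).
have [|b row_b] := unbalanced_row_in_class _
  (basis_coords_unbalanced indep_free rainbow_indep tK lamE).
  exact: leq_ltn_trans (leq0n _) (ltn_ord (c x0)).
have [D cutD sD] :=
  minset_exists (class_meets_all_bases indep_free rainbow_indep tK lamE row_b).
by exists D; split=> // x y /(subsetP sD) xb /(subsetP sD); apply: monochromatic_class.
Qed.

Section RainbowCutOrMonochromaticCircuit.
Variables (S : finType) (vT : vectType 'F_2) (v : S -> vT) (M : matroid S).
Hypothesis indep_free : forall A, indep M A = free [seq v x | x in A].
Variable c : S -> 'I_(#|S| - mrank M).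
Hypothesis rainbow_avoids_basis : forall A, rainbow c A -> ~~ meets_all_bases M A.

Lemma section_cobasis f : cancel f c -> basis M (~: (f @: setT)).
Proof.
move=> fK; have := rainbow_avoids_basis (section_rainbow fK).
rewrite negb_forall => /existsP [B]; rewrite negb_imply negbK setI_eq0 => /andP [bB fB].
suff <- : B = ~: (f @: setT) by [].
have cardC : #|~: (f @: setT)| = mrank M.
  have := cardsC (f @: setT); rewrite (card_section fK); move: #|~: _| => n.
  by have := rank_le_card M; lia.
by apply/eqP; rewrite eqEcard -disjoints_subset disjoint_sym fB cardC (card_basis bB) /=.
Qed.

Variables (t : 'I_(#|S| - mrank M) -> S) (lam : 'I_(#|S| - mrank M) -> S -> 'F_2).
Hypotheses (tK : cancel t c) (lam_circuit : forall b, lcomb v (lam b) = 0)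
  (lam_t : forall a b, lam b (t a) = (a == b)%:R).

Lemma fundamental_circuits_unbalanced Y e : ~ balanced c lam Y e.
Proof.
move=> [/set0Pn [a0 a0Y] eK _ cols0].
pose f a := if a \in Y then e a else t a.
have fK : cancel f c by move=> a; rewrite /f; case: ifP => [/eK|].
have sum_t a : \sum_(b in Y) lam b (t a) = (a \in Y)%:R.
  rewrite (eq_bigr _ (fun b _ => lam_t a b)); have [aY|aNY] := boolP (a \in Y).
    rewrite (bigD1 a) //= eqxx big1 ?addr0 // => b /andP [_].
    by rewrite eq_sym => /negPf ->.
  by rewrite big1 // => b bY; case: eqP aNY => // ->; rewrite bY.
suff /(_ (t a0)) : forall x, \sum_(b in Y) lam b x = 0.
  by rewrite sum_t a0Y => /eqP; rewrite oner_eq0.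
apply: (indep_lcomb_eq0 indep_free (maxsetp (section_cobasis fK))).
  move=> x; rewrite inE negbK => /imsetP [a _ ->]; rewrite /f.
  by case: ifP => [/cols0 | aNY] //; rewrite sum_t aNY.
by rewrite lcomb_sum big1 // => b _; apply: lam_circuit.
Qed.

Lemma class_dependent b : (forall y, c y != b -> lam b y = 0) ->
  ~~ indep M [set x | c x == b].
Proof.
move=> row_b; apply/negP => /(indep_lcomb_eq0 indep_free (k := lam b)) lam_b0.
suff /eqP : lam b (t b) = 0 by rewrite lam_t eqxx oner_eq0.
by apply: lam_b0 (lam_circuit b) _ => y; rewrite inE => /row_b.
Qed.

End RainbowCutOrMonochromaticCircuit.

Lemma rainbow_cut_or_monochromatic_circuit (S : finType) (vT : vectType 'F_2)
    (v : S -> vT) (M : matroid S) (c : S -> 'I_(#|S| - mrank M)) :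
  (forall A, indep M A = free [seq v x | x in A]) -> (0 < #|S|)%N -> coloring c ->
  (exists D, cut M D /\ rainbow c D) \/ (exists C, circuit M C /\ monochromatic c C).
Proof.
move=> indep_free /card_gt0P [x0 _] col.
have [|no_rainbow] := classic (exists D, cut M D /\ rainbow c D); [by left | right].
have [|no_mono] := classic (exists C, circuit M C /\ monochromatic c C); [by [] | exfalso].
have rainbow_avoids A : rainbow c A -> ~~ meets_all_bases M A.
  move=> rA; apply/negP => /minset_exists [D cutD sDA]; case: no_rainbow.
  by exists D; split=> //; apply: sub_in2 rA => x; apply: (subsetP sDA).
have [t tK] := coloring_section col.
have [|lam lam_circuit lam_t] := fundamental_circuits indep_free (can_inj tK)
  (section_cobasis rainbow_avoids tK).
  by move=> a; rewrite inE negbK imset_f.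
have [|b row_b] := unbalanced_row_in_class _
  (fundamental_circuits_unbalanced indep_free rainbow_avoids tK lam_circuit lam_t).
  exact: leq_ltn_trans (leq0n _) (ltn_ord (c x0)).
have [C circC sC] := @minset_exists _ (fun X => ~~ indep M X) _
  (class_dependent indep_free lam_circuit lam_t row_b).
case: no_mono; exists C; split=> //.
by move=> x y /(subsetP sC) xb /(subsetP sC); apply: monochromatic_class.
Qed.

Local Close Scope ring_scope.

Theorem theorem1 (S : finType) (M : matroid S) :
  0 < #|S| -> binary M -> loopless M ->
  (forall c : S -> 'I_(mrank M), coloring c ->
     (exists C, circuit M C /\ rainbow c C) \/
     (exists D, cut M D /\ monochromatic c D)) /\
  (forall c : S -> 'I_(#|S| - mrank M), coloring c ->
     (exists D, cut M D /\ rainbow c D) \/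
     (exists C, circuit M C /\ monochromatic c C)).
Proof.
(* A loop is a rainbow and monochromatic circuit. *)
move=> S_gt0 [m [v indep_free]] _; split=> c.
  exact: rainbow_circuit_or_monochromatic_cut indep_free S_gt0.
exact: rainbow_cut_or_monochromatic_circuit indep_free S_gt0.
Qed.
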